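(* Consider Model 1 (the risk-averse insider model) with $N\ge 1$ trading periods, as described in the context. A subgame perfect linear equilibrium exists. In this equilibrium there are real numbers $\beta_n,\lambda_n,\alpha_n,\delta_n,\Sigma_n$ such that for $n=1,\dots,N$: $x_n=\beta_n(v-p_{n-1})$, $p_n-p_{n-1}=\lambda_n y_n$, $\Sigma_n=\operatorname{Var}(v\mid y_1,\dots,y_n)$, and $$E\Big(\sum_{k=n}^N\pi_k\,\Big|\,p_1,\dots,p_{n-1},v\Big)=\alpha_{n-1}(v-p_{n-1})^2+\delta_{n-1},$$ where $$\delta_n=a_n\sigma_u\Delta t_N^{1/2}\Sigma_n^{1/2},\quad \alpha_n=b_n\sigma_u\Delta t_N^{1/2}\Sigma_n^{-1/2}\quad(n=0,1,\dots,N-1),\qquad \beta_n=c_n\sigma_u\Delta t_N^{1/2}\Sigma_{n-1}^{-1/2}\quad(n=1,\dots,N),$$ and the sequences $\{a_n\},\{b_n\},\{c_n\}$, with terminal values $a_{N-1}=0$, $b_{N-1}=\tfrac12$, $c_N=1$, satisfy for $n=1,\dots,N-1$ the recursion $$a_{n-1}=a_n\Big(\frac{1}{c_n^2+1}\Big)^{1/2}+b_n\Big(\frac{1}{c_n^2+1}\Big)^{3/2}c_n^2,\qquad b_{n-1}=b_n\Big(\frac{1}{c_n^2+1}\Big)^{3/2}+\frac{c_n}{c_n^2+1},\qquad c_n=\Big(\frac{2b_n-a_n}{a_n+b_n}\Big)^{1/2},$$ with $c_n>0$ for $n=1,\dots,N$.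
   Context: Model. Fix an integer $N\ge1$ and put $\Delta t_N=1/N$. A risky asset has liquidation value $v\sim N(p_0,\Sigma_0)$ with $\Sigma_0=\sigma_v^2>0$. In each period $n=1,\dots,N$ noise traders submit $u_n\sim N(0,\sigma_u^2\Delta t_N)$ ($\sigma_u>0$), the $u_n$ i.i.d. and independent of $v$. The insider knows $v$ and submits an order $x_n=\beta_n(v-p_{n-1})$ with $\beta_n\in\mathbb R$ (this is the insider's strategy space). The market maker observes the total order $y_n=x_n+u_n$ and sets the price $p_n=E[v\mid y_1,\dots,y_n]$ (semi-strong market efficiency). The insider's profit in period $n$ is $\pi_n=x_n(v-p_n)$, and $\Sigma_n=\operatorname{Var}(v\mid y_1,\dots,y_n)$. For such strategies, with $\lambda_n=\beta_n\Sigma_{n-1}/(\beta_n^2\Sigma_{n-1}+\sigma_u^2\Delta t_N)$ one has $p_n-p_{n-1}=\lambda_ny_n$ and $\Sigma_n=\Sigma_{n-1}\sigma_u^2\Delta t_N/(\beta_n^2\Sigma_{n-1}+\sigma_u^2\Delta t_N)$, and $E(\sum_{k=n}^N\pi_k\mid p_1,\dots,p_{n-1},v)=\alpha_{n-1}(v-p_{n-1})^2+\delta_{n-1}$ with $\alpha_N=\delta_N=0$, $\alpha_{n-1}=\alpha_n(1-\lambda_n\beta_n)^2+\beta_n(1-\lambda_n\beta_n)$, $\delta_{n-1}=\delta_n+\alpha_n\lambda_n^2\sigma_u^2\Delta t_N$. Here $\alpha_{n-1}(v-p_{n-1})^2$ is the ''risky profit'' and $\delta_{n-1}$ the ''guaranteed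 profit''. Equilibrium. An insider strategy specifies, for each period $n$ and each value $\Sigma_{n-1}>0$ of the current conditional variance, an intensity $\beta_n$. Given the strategy for periods $n+1,\dots,N$, each choice of $\beta_n$ determines (through the formulas above, with later intensities given by the strategy applied to the resulting conditional variances) $\alpha_{n-1}$ and $\delta_{n-1}$ as functions of $\beta_n$ and $\Sigma_{n-1}$. A subgame perfect (linear) equilibrium of Model 1 is a strategy such that for every $n$ and every $\Sigma_{n-1}>0$ the prescribed $\beta_n$ first maximizes the guaranteed profit $\delta_{n-1}$ over $\beta_n\in\mathbb R$, and, among the maximizers of $\delta_{n-1}$, maximizes the risky profit $\alpha_{n-1}(v-p_{n-1})^2$ (i.e. maximizes $\alpha_{n-1}$), with the market maker pricing efficiently given this strategy. *)

From Stdlib Require Import Reals Lra Lia.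
Open Scope R_scope.

(* Model 1, encoded through the recursive formulas given in the context.
   Parameters: N (number of periods), su = sigma_u, sv = sigma_v. *)

(* sigma_u^2 * Delta t_N *)
Definition s2 (N : nat) (su : R) : R := su ^ 2 / INR N.

(* lambda_n as a function of beta_n and Sigma_{n-1} *)
Definition lam (N : nat) (su b Sg : R) : R := b * Sg / (b ^ 2 * Sg + s2 N su).

(* Sigma_n as a function of beta_n and Sigma_{n-1} *)
Definition Snext (N : nat) (su b Sg : R) : R :=
  Sg * s2 N su / (b ^ 2 * Sg + s2 N su).

(* An insider strategy: for each period n and current variance Sigma_{n-1},
   an intensity beta_n. *)
Definition strategy := nat -> R -> R.

(* One backward step: from (alpha_n, delta_n) and the choice beta_n = b at
   variance Sigma_{n-1} = Sg, compute (alpha_{n-1}, delta_{n-1}). *)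
Definition step (N : nat) (su b Sg : R) (ad : R * R) : R * R :=
  let '(a', d') := ad in
  let l := lam N su b Sg in
  (a' * (1 - l * b) ^ 2 + b * (1 - l * b), d' + a' * l ^ 2 * s2 N su).

(* cont N su st n m Sg: (alpha_{n-1}, delta_{n-1}) when periods n, ..., n+m-1
   are played according to st starting from Sigma_{n-1} = Sg
   (with alpha = delta = 0 after the last period). *)
Fixpoint cont (N : nat) (su : R) (st : strategy) (n m : nat) (Sg : R) : R * R :=
  match m with
  | O => (0, 0)
  | S m' => let b := st n Sg in
            step N su b Sg (cont N su st (S n) m' (Snext N su b Sg))
  end.

Definition dev (N : nat) (su : R) (st : strategy) (n : nat) (b Sg : R) : R * R :=
  step N su b Sg (cont N su st (S n) (N - n) (Snext N su b Sg)).

Definition is_SPE (N : nat) (su : R) (st : strategy) : Prop :=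
  forall n : nat, (1 <= n <= N)%nat ->
  forall Sg : R, 0 < Sg ->
  forall b : R,
    let best := dev N su st n (st n Sg) Sg in
    let alt := dev N su st n b Sg in
    snd alt <= snd best /\ (snd alt = snd best -> fst alt <= fst best).

Fixpoint Sig (N : nat) (su sv : R) (st : strategy) (n : nat) : R :=
  match n with
  | O => sv ^ 2
  | S k => Snext N su (st (S k) (Sig N su sv st k)) (Sig N su sv st k)
  end.

Definition beta (N : nat) (su sv : R) (st : strategy) (n : nat) : R :=
  st n (Sig N su sv st (n - 1)).

Definition lambda (N : nat) (su sv : R) (st : strategy) (n : nat) : R :=
  lam N su (beta N su sv st n) (Sig N su sv st (n - 1)).

Definition alpha (N : nat) (su sv : R) (st : strategy) (n : nat) : R :=
  fst (cont N su st (S n) (N - n) (Sig N su sv st n)).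
Definition delta (N : nat) (su sv : R) (st : strategy) (n : nat) : R :=
  snd (cont N su st (S n) (N - n) (Sig N su sv st n)).

From Stdlib Require Import Reals Lra Lia.
Open Scope R_scope.

(* In equilibrium beta_n = c_n r / sqrt Sigma_{n-1} with r = sigma_u sqrt (Delta t_N),
   and backward induction keeps the values in the scaled form
   alpha_n = b_n r / sqrt Sigma_n, delta_n = a_n r sqrt Sigma_n.  A deviation in
   period n only changes y = sqrt (Sigma_n / Sigma_{n-1}) in (0, 1], and the guaranteed
   profit becomes r sqrt Sigma_{n-1} (a_n y + b_n (y - y^3)); this cubic falls short of its
   value at y*^2 = (a_n + b_n) / (3 b_n), i.e. at intensity c_n, by exactly
   b_n (y - y* )^2 (y + 2 y* ).  The maximizers are therefore +- c_n r / sqrt Sigma_{n-1},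
   and the positive one has the larger risky profit.  In the last period
   a_N = b_N = 0, so only the risky profit counts and it peaks at c_N = 1.  The
   invariant 0 <= a_n < 2 b_n keeps c_n well defined and positive. *)

Definition shrink (c : R) : R := sqrt (1 / (c ^ 2 + 1)).

Definition coef_c (a b : R) : R := sqrt ((2 * b - a) / (a + b)).

Definition coef_update (a b c : R) : R * R :=
  (a * shrink c + b * shrink c ^ 3 * c ^ 2, b * shrink c ^ 3 + c / (c ^ 2 + 1)).

Definition coef_step (a b : R) : R * R := coef_update a b (coef_c a b).

Fixpoint coefs (k : nat) : R * R :=
  match k with
  | O => (0, 1 / 2)
  | S k => coef_step (fst (coefs k)) (snd (coefs k))
  end.

Definition a_seq (N n : nat) : R := if (n <? N)%nat then fst (coefs (N - 1 - n)) else 0.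
Definition b_seq (N n : nat) : R := if (n <? N)%nat then snd (coefs (N - 1 - n)) else 0.
Definition c_seq (N n : nat) : R :=
  if (n <? N)%nat then coef_c (a_seq N n) (b_seq N n) else 1.

Definition admissible (a b : R) : Prop := 0 <= a /\ 0 < b /\ a < 2 * b.

Lemma shrink_pos c : 0 < shrink c.
Proof. apply sqrt_lt_R0, Rdiv_lt_0_compat; nra. Qed.

Lemma shrink_sq c : shrink c ^ 2 = 1 / (c ^ 2 + 1).
Proof. apply pow2_sqrt, Rlt_le, Rdiv_lt_0_compat; nra. Qed.

Lemma coef_c_pos a b : admissible a b -> 0 < coef_c a b.
Proof. intros (? & ? & ?); apply sqrt_lt_R0, Rdiv_lt_0_compat; lra. Qed.

Lemma coef_c_sq a b : admissible a b -> coef_c a b ^ 2 = (2 * b - a) / (a + b).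
Proof. intros (? & ? & ?); apply pow2_sqrt, Rlt_le, Rdiv_lt_0_compat; lra. Qed.

Lemma shrink_coef_c_sq a b : admissible a b -> shrink (coef_c a b) ^ 2 = (a + b) / (3 * b).
Proof.
  intros Hab. rewrite shrink_sq, (coef_c_sq a b Hab).
  destruct Hab as (? & ? & ?). field. split; lra.
Qed.

(* With y = shrink c one has y^2 = (a+b)/(3b) and c^2 y^2 = 1 - y^2, so the
   new a-coefficient collapses to 2 b y^3 while the new b-coefficient is
   b y^3 + c y^2. *)
Lemma coef_step_admissible a b :
  admissible a b -> admissible (fst (coef_step a b)) (snd (coef_step a b)).
Proof.
  intros Hab. unfold coef_step, coef_update; cbn [fst snd].
  assert (Hc := coef_c_pos a b Hab).
  assert (Hy2 := shrink_coef_c_sq a b Hab). assert (Hy2' := shrink_sq (coef_c a b)).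
  assert (Hy := shrink_pos (coef_c a b)).
  set (c := coef_c a b) in *. set (y := shrink c) in *.
  destruct Hab as (Ha & Hb & Hab).
  assert (Hcy : c ^ 2 * y ^ 2 = 1 - y ^ 2) by (rewrite Hy2'; field; nra).
  assert (Ha' : a * y + b * y ^ 3 * c ^ 2 = 2 * b * y ^ 3).
  { replace (b * y ^ 3 * c ^ 2) with (b * y * (c ^ 2 * y ^ 2)) by ring.
    rewrite Hcy. replace a with (3 * b * y ^ 2 - b) by (rewrite Hy2; field; lra). ring. }
  assert (Hb' : c / (c ^ 2 + 1) = c * y ^ 2) by (rewrite Hy2'; field; nra).
  rewrite Ha', Hb'.
  assert (0 < b * y ^ 3) by (apply Rmult_lt_0_compat; [lra | apply pow_lt; lra]).
  assert (0 < c * y ^ 2) by (apply Rmult_lt_0_compat; [lra | apply pow_lt; lra]).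
  unfold admissible; lra.
Qed.

Lemma coefs_admissible k : admissible (fst (coefs k)) (snd (coefs k)).
Proof.
  induction k as [|k IH]; cbn [coefs].
  - unfold admissible; simpl; lra.
  - exact (coef_step_admissible _ _ IH).
Qed.

Lemma seq_admissible N n : (n < N)%nat -> admissible (a_seq N n) (b_seq N n).
Proof.
  intros Hn. unfold a_seq, b_seq. destruct (Nat.ltb_spec n N); [|lia].
  apply coefs_admissible.
Qed.

Lemma c_seq_lt N n : (n < N)%nat -> c_seq N n = coef_c (a_seq N n) (b_seq N n).
Proof. intros Hn. unfold c_seq. destruct (Nat.ltb_spec n N); [reflexivity | lia]. Qed.

Lemma seq_last N : a_seq N N = 0 /\ b_seq N N = 0 /\ c_seq N N = 1.
Proof. unfold a_seq, b_seq, c_seq. rewrite Nat.ltb_irrefl. auto. Qed.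

Lemma seq_penultimate N : (1 <= N)%nat -> a_seq N (N - 1) = 0 /\ b_seq N (N - 1) = 1 / 2.
Proof.
  intros HN. unfold a_seq, b_seq. destruct (Nat.ltb_spec (N - 1) N); [|lia].
  replace (N - 1 - (N - 1))%nat with 0%nat by lia. auto.
Qed.

Lemma seq_recursion N n : (S n <= N)%nat ->
  (a_seq N n, b_seq N n) = coef_update (a_seq N (S n)) (b_seq N (S n)) (c_seq N (S n)).
Proof.
  intros Hn. destruct (Nat.eq_dec (S n) N) as [<- | Hne].
  - destruct (seq_last (S n)) as (-> & -> & ->).
    destruct (seq_penultimate (S n) ltac:(lia)) as [Ha Hb].
    rewrite Nat.sub_1_r in Ha, Hb. cbn [Nat.pred] in Ha, Hb. rewrite Ha, Hb.
    unfold coef_update. f_equal; field.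
  - rewrite c_seq_lt by lia. unfold a_seq, b_seq.
    destruct (Nat.ltb_spec n N), (Nat.ltb_spec (S n) N); try lia.
    replace (N - 1 - n)%nat with (S (N - 1 - S n)) by lia. reflexivity.
Qed.

Lemma c_seq_pos N n : (n <= N)%nat -> 0 < c_seq N n.
Proof.
  intros Hn. destruct (Nat.eq_dec n N) as [-> | Hne].
  - rewrite (proj2 (proj2 (seq_last N))). lra.
  - rewrite c_seq_lt by lia. apply coef_c_pos, seq_admissible. lia.
Qed.

Lemma cubic_gain_gap A B y ys : A + B = 3 * B * ys ^ 2 ->
  (A * ys + B * (ys - ys ^ 3)) - (A * y + B * (y - y ^ 3)) = B * (y - ys) ^ 2 * (y + 2 * ys).
Proof. intros Hys. replace A with (3 * B * ys ^ 2 - B) by lra. ring. Qed.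

Section LinearStrategy.

Variables (N : nat) (su r : R).
Hypotheses (r_pos : 0 < r) (r_sq : r ^ 2 = s2 N su).

(* sqrt (Sigma_n / Sigma_{n-1}) when beta_n = b is played at Sigma_{n-1} = Sg. *)
Definition sd_ratio (b Sg : R) : R := r / sqrt (b ^ 2 * Sg + r ^ 2).

Lemma sd_ratio_pos b Sg : 0 < Sg -> 0 < sd_ratio b Sg.
Proof. intros. apply Rdiv_lt_0_compat; [lra | apply sqrt_lt_R0; nra]. Qed.

Lemma sd_ratio_sq b Sg : 0 < Sg -> sd_ratio b Sg ^ 2 = r ^ 2 / (b ^ 2 * Sg + r ^ 2).
Proof.
  intros HSg. assert (HD : 0 < b ^ 2 * Sg + r ^ 2) by nra.
  unfold sd_ratio. rewrite <- (pow2_sqrt (b ^ 2 * Sg + r ^ 2)) at 2 by lra.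
  field. apply Rgt_not_eq, sqrt_lt_R0; lra.
Qed.

Lemma sqrt_Snext b Sg : 0 < Sg -> sqrt (Snext N su b Sg) = sqrt Sg * sd_ratio b Sg.
Proof.
  intros HSg. assert (Hy := sd_ratio_pos b Sg HSg).
  assert (0 < Sg * r ^ 2) by (apply Rmult_lt_0_compat; nra).
  apply sqrt_lem_1.
  - unfold Snext. rewrite <- r_sq. apply Rlt_le, Rdiv_lt_0_compat; nra.
  - apply Rmult_le_pos; [apply sqrt_pos | lra].
  - replace (sqrt Sg * sd_ratio b Sg * (sqrt Sg * sd_ratio b Sg))
      with (sqrt Sg ^ 2 * sd_ratio b Sg ^ 2) by ring.
    rewrite pow2_sqrt, sd_ratio_sq by lra.
    unfold Snext. rewrite <- r_sq. field. nra.
Qed.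

Lemma step_scaled A B b Sg : 0 < Sg ->
  step N su b Sg (B * r / sqrt (Snext N su b Sg), A * r * sqrt (Snext N su b Sg))
  = (B * r * sd_ratio b Sg ^ 3 / sqrt Sg + b * sd_ratio b Sg ^ 2,
     r * sqrt Sg * (A * sd_ratio b Sg + B * (sd_ratio b Sg - sd_ratio b Sg ^ 3))).
Proof.
  intros HSg. rewrite sqrt_Snext by exact HSg.
  assert (Hy := sd_ratio_pos b Sg HSg). assert (Hy2 := sd_ratio_sq b Sg HSg).
  assert (Hq := sqrt_lt_R0 Sg HSg). assert (Hq2 := pow2_sqrt Sg (Rlt_le _ _ HSg)).
  assert (HD : 0 < b ^ 2 * Sg + r ^ 2) by nra.
  unfold step, lam. rewrite <- r_sq.
  set (y := sd_ratio b Sg) in *. set (q := sqrt Sg) in *.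
  set (l := b * Sg / (b ^ 2 * Sg + r ^ 2)).
  assert (Hgain : 1 - l * b = y ^ 2) by (unfold l; rewrite Hy2; field; lra).
  assert (Hnoise : l ^ 2 * r ^ 2 = q ^ 2 * y ^ 2 * (1 - y ^ 2)).
  { unfold l. rewrite Hq2, Hy2. field. lra. }
  rewrite Hgain. f_equal.
  - field. lra.
  - replace (B * r / (q * y) * l ^ 2 * r ^ 2) with (B * r / (q * y) * (l ^ 2 * r ^ 2)) by ring.
    rewrite Hnoise. field. lra.
Qed.

Lemma sd_ratio_intensity c Sg : 0 < Sg -> sd_ratio (c * r / sqrt Sg) Sg = shrink c.
Proof.
  intros HSg. assert (Hq := sqrt_lt_R0 Sg HSg). assert (Hq2 := pow2_sqrt Sg (Rlt_le _ _ HSg)).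
  rewrite <- (sqrt_pow2 (sd_ratio _ Sg)) by (apply Rlt_le, sd_ratio_pos, HSg).
  rewrite sd_ratio_sq by exact HSg. unfold shrink. f_equal.
  rewrite <- Hq2 at 2. field. split; nra.
Qed.

Lemma step_intensity A B c Sg : 0 < Sg ->
  let b := c * r / sqrt Sg in
  step N su b Sg (B * r / sqrt (Snext N su b Sg), A * r * sqrt (Snext N su b Sg))
  = (snd (coef_update A B c) * r / sqrt Sg, fst (coef_update A B c) * r * sqrt Sg).
Proof.
  intros HSg b. rewrite step_scaled by exact HSg. unfold b. rewrite sd_ratio_intensity by exact HSg.
  assert (Hq := sqrt_lt_R0 Sg HSg). assert (Hy2 := shrink_sq c).
  unfold coef_update; cbn [fst snd]. set (y := shrink c) in *.
  assert (Hy2c : y ^ 2 * (c ^ 2 + 1) = 1) by (rewrite Hy2; field; nra).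
  f_equal.
  - rewrite Hy2. field. split; nra.
  - replace (y - y ^ 3) with (y ^ 3 * c ^ 2 + y * (1 - y ^ 2 * (c ^ 2 + 1))) by ring.
    rewrite Hy2c. ring.
Qed.

Lemma Snext_pos b Sg : 0 < Sg -> 0 < Snext N su b Sg.
Proof.
  intros HSg. unfold Snext. rewrite <- r_sq.
  apply Rdiv_lt_0_compat; [apply Rmult_lt_0_compat|]; nra.
Qed.

Lemma sd_ratio_sq_inj b b' Sg : 0 < Sg -> sd_ratio b Sg = sd_ratio b' Sg -> b ^ 2 = b' ^ 2.
Proof.
  intros HSg Heq. assert (Hsq := f_equal (fun y => y ^ 2) Heq). cbn beta in Hsq.
  rewrite !sd_ratio_sq in Hsq by exact HSg.
  assert (0 < b ^ 2 * Sg + r ^ 2) by nra. assert (0 < b' ^ 2 * Sg + r ^ 2) by nra.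
  assert (HD : b ^ 2 * Sg + r ^ 2 = b' ^ 2 * Sg + r ^ 2).
  { replace (b ^ 2 * Sg + r ^ 2) with (r ^ 2 / (r ^ 2 / (b ^ 2 * Sg + r ^ 2)))
      by (field; split; nra).
    rewrite Hsq. field. split; nra. }
  apply (Rmult_eq_reg_r Sg); lra.
Qed.

Definition lin_strategy : strategy := fun n Sg => c_seq N n * r / sqrt Sg.

Lemma cont_lin_strategy k Sg : (k <= N)%nat -> 0 < Sg ->
  cont N su lin_strategy (S (N - k)) k Sg
  = (b_seq N (N - k) * r / sqrt Sg, a_seq N (N - k) * r * sqrt Sg).
Proof.
  revert Sg. induction k as [|k IH]; intros Sg Hk HSg.
  - rewrite Nat.sub_0_r. destruct (seq_last N) as (-> & -> & _). cbn [cont].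
    f_equal; field; apply Rgt_not_eq, sqrt_lt_R0, HSg.
  - replace (S (N - S k)) with (N - k)%nat by lia. cbn [cont].
    rewrite IH by (lia || apply Snext_pos, HSg).
    unfold lin_strategy at 1 2 3. rewrite step_intensity by exact HSg.
    replace (N - k)%nat with (S (N - S k)) by lia.
    rewrite <- (seq_recursion N (N - S k)) by lia. reflexivity.
Qed.

Lemma dev_lin_strategy n b Sg : (1 <= n <= N)%nat -> 0 < Sg ->
  dev N su lin_strategy n b Sg
  = (b_seq N n * r * sd_ratio b Sg ^ 3 / sqrt Sg + b * sd_ratio b Sg ^ 2,
     r * sqrt Sg * (a_seq N n * sd_ratio b Sg
                    + b_seq N n * (sd_ratio b Sg - sd_ratio b Sg ^ 3))).
Proof.
  intros Hn HSg. unfold dev.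
  replace (S n) with (S (N - (N - n))) by lia.
  rewrite cont_lin_strategy by (lia || apply Snext_pos, HSg).
  replace (N - (N - n))%nat with n by lia.
  apply step_scaled, HSg.
Qed.

(* In the last period delta_{N-1} = 0 whatever beta_N, and alpha_{N-1} = b r^2 / (b^2 Sg + r^2)
   is maximal at b = r / sqrt Sg (AM-GM). *)
Lemma last_period_best b Sg : 0 < Sg ->
  b * sd_ratio b Sg ^ 2 <= r / sqrt Sg * sd_ratio (r / sqrt Sg) Sg ^ 2.
Proof.
  intros HSg. assert (Hq := sqrt_lt_R0 Sg HSg). assert (Hq2 := pow2_sqrt Sg (Rlt_le _ _ HSg)).
  rewrite !sd_ratio_sq by exact HSg. set (q := sqrt Sg) in *. rewrite <- Hq2.
  assert (HD : 0 < b ^ 2 * q ^ 2 + r ^ 2) by nra.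
  replace ((r / q) ^ 2 * q ^ 2 + r ^ 2) with (2 * r ^ 2) by (field; lra).
  assert (Hgap : r / q * (r ^ 2 / (2 * r ^ 2)) - b * (r ^ 2 / (b ^ 2 * q ^ 2 + r ^ 2))
                 = r * (b * q - r) ^ 2 / (2 * q * (b ^ 2 * q ^ 2 + r ^ 2))) by (field; lra).
  assert (0 <= r * (b * q - r) ^ 2 / (2 * q * (b ^ 2 * q ^ 2 + r ^ 2))).
  { apply Rmult_le_pos; [apply Rmult_le_pos; [lra | apply pow2_ge_0]|].
    apply Rlt_le, Rinv_0_lt_compat. nra. }
  lra.
Qed.

Lemma lin_strategy_SPE : is_SPE N su lin_strategy.
Proof.
  intros n Hn Sg HSg b. cbv zeta. rewrite !dev_lin_strategy by assumption. cbn [fst snd].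
  unfold lin_strategy. assert (Hq := sqrt_lt_R0 Sg HSg).
  assert (Hy := sd_ratio_pos b Sg HSg).
  destruct (Nat.eq_dec n N) as [-> | Hne].
  - destruct (seq_last N) as (-> & -> & ->). rewrite Rmult_1_l.
    assert (Hlast := last_period_best b Sg HSg).
    split; [lra | intros _].
    unfold Rdiv in *. lra.
  - assert (Hab := seq_admissible N n ltac:(lia)).
    assert (Hc := coef_c_pos _ _ Hab). assert (Hys2 := shrink_coef_c_sq _ _ Hab).
    rewrite c_seq_lt by lia. rewrite (sd_ratio_intensity _ Sg HSg).
    assert (Hys := shrink_pos (coef_c (a_seq N n) (b_seq N n))).
    set (c := coef_c (a_seq N n) (b_seq N n)) in *. set (ys := shrink c) in *.
    set (y := sd_ratio b Sg) in *. set (q := sqrt Sg) in *.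
    set (A := a_seq N n) in *. set (B := b_seq N n) in *.
    destruct Hab as (HA & HB & HAB).
    assert (Hgap := cubic_gain_gap A B y ys ltac:(rewrite Hys2; field; lra)).
    assert (0 <= B * (y - ys) ^ 2 * (y + 2 * ys))
      by (apply Rmult_le_pos; [apply Rmult_le_pos; [lra | apply pow2_ge_0] | lra]).
    assert (Hrq : 0 < r * q) by nra.
    split; [apply Rmult_le_compat_l; lra | intros Htie].
    apply Rmult_eq_reg_l in Htie; [|lra].
    assert (Hyys : y = ys).
    { assert (Hz : B * (y - ys) ^ 2 * (y + 2 * ys) = 0) by lra.
      apply Rmult_integral in Hz as [Hz | Hz]; [|lra].
      apply Rmult_integral in Hz as [Hz | Hz]; [lra|].
      nra. }
    assert (Hb2 : b ^ 2 = (c * r / q) ^ 2).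
    { apply (sd_ratio_sq_inj b (c * r / q) Sg HSg). unfold y, ys, q in *.
      rewrite sd_ratio_intensity by exact HSg. exact Hyys. }
    assert (0 < c * r / q) by (apply Rdiv_lt_0_compat; nra).
    assert (b <= c * r / q) by nra.
    rewrite Hyys. assert (0 < ys ^ 2) by nra. nra.
Qed.

End LinearStrategy.

Lemma Sig_pos N su sv st n : 0 < s2 N su -> 0 < sv -> 0 < Sig N su sv st n.
Proof.
  intros Hs Hsv. induction n as [|n IH]; cbn [Sig].
  - nra.
  - unfold Snext. apply Rdiv_lt_0_compat; [apply Rmult_lt_0_compat|]; nra.
Qed.

Lemma noise_scale_sq N su : (1 <= N)%nat -> 0 < su ->
  0 < su * sqrt (1 / INR N) /\ (su * sqrt (1 / INR N)) ^ 2 = s2 N su.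
Proof.
  intros HN Hsu. assert (HI : 0 < INR N) by (apply lt_0_INR; lia).
  assert (0 < 1 / INR N) by (apply Rdiv_lt_0_compat; lra).
  split.
  - apply Rmult_lt_0_compat; [lra | apply sqrt_lt_R0; lra].
  - rewrite Rpow_mult_distr, pow2_sqrt by lra. unfold s2. field. lra.
Qed.

Theorem theorem1 (N : nat) (su sv : R) :
  (1 <= N)%nat -> 0 < su -> 0 < sv ->
  exists st : strategy,
    is_SPE N su st /\
    exists a b c : nat -> R,
      a (N - 1)%nat = 0 /\ b (N - 1)%nat = 1 / 2 /\ c N = 1 /\
      (forall n : nat, (1 <= n <= N - 1)%nat ->
         a (n - 1)%nat = a n * sqrt (1 / (c n ^ 2 + 1))
                         + b n * sqrt (1 / (c n ^ 2 + 1)) ^ 3 * c n ^ 2 /\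
         b (n - 1)%nat = b n * sqrt (1 / (c n ^ 2 + 1)) ^ 3
                         + c n / (c n ^ 2 + 1) /\
         c n = sqrt ((2 * b n - a n) / (a n + b n))) /\
      (forall n : nat, (1 <= n <= N)%nat -> 0 < c n) /\
      (forall n : nat, (n <= N - 1)%nat ->
         delta N su sv st n
           = a n * su * sqrt (1 / INR N) * sqrt (Sig N su sv st n) /\
         alpha N su sv st n
           = b n * su * sqrt (1 / INR N) / sqrt (Sig N su sv st n)) /\
      (forall n : nat, (1 <= n <= N)%nat ->
         beta N su sv st n
           = c n * su * sqrt (1 / INR N) / sqrt (Sig N su sv st (n - 1))).
Proof.
  intros HN Hsu Hsv.
  destruct (noise_scale_sq N su HN Hsu) as [Hr Hrs].
  set (r := su * sqrt (1 / INR N)) in Hr, Hrs.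
  exists (lin_strategy N r). split; [exact (lin_strategy_SPE N su r Hr Hrs) |].
  exists (a_seq N), (b_seq N), (c_seq N).
  destruct (seq_penultimate N HN) as [Ha Hb].
  do 3 (split; [assumption || exact (proj2 (proj2 (seq_last N))) |]).
  split; [| split; [| split]].
  - intros n Hn. assert (Hrec := seq_recursion N (n - 1) ltac:(lia)).
    replace (S (n - 1)) with n in Hrec by lia. unfold coef_update in Hrec.
    injection Hrec as Ea Eb. split; [exact Ea | split; [exact Eb | apply c_seq_lt; lia]].
  - intros n Hn. apply c_seq_pos. lia.
  - intros n Hn. unfold delta, alpha.
    assert (HSig : 0 < Sig N su sv (lin_strategy N r) n)
      by (apply Sig_pos; [rewrite <- Hrs; nra | exact Hsv]).
    replace (S n) with (S (N - (N - n))) by lia.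
    rewrite (cont_lin_strategy N su r Hr Hrs) by (lia || exact HSig).
    replace (N - (N - n))%nat with n by lia. cbn [fst snd].
    split; unfold r, Rdiv; ring.
  - intros n Hn. unfold beta, lin_strategy, r, Rdiv. ring.
Qed.
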